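(* Let $n\geq2$. For $\sigma>0$ let $u_\sigma:[0,\infty)\to\mathbb{R}^+$ denote the unique smooth solution of $$u''(x)=\Big[\frac{xu'(x)-u(x)}{2}+\frac{n-1}{u(x)}\Big]\big(1+(u'(x))^2\big)$$ that is asymptotic to the ray $x\mapsto\sigma x$ as $x\to+\infty$. Then for all sufficiently large $\sigma>0$, $u_\sigma$ has positive slope ($u_\sigma'>0$) on $[0,\infty)$.
   Context: For each $\sigma>0$ such a solution $u_\sigma$ exists and is unique; it satisfies $u_\sigma(x)>\sigma x$ and $|u_\sigma(x)-\sigma x|=O(1/x)$ as $x\to\infty$. *)

From Stdlib Require Import Reals.
From Coquelicot Require Import Coquelicot.
Open Scope R_scope.

Definition smooth_on_nonneg (u : R -> R) : Prop :=
  exists eps : R, 0 < eps /\ forall (k : nat) (x : R), - eps < x -> ex_derive_n u k x.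

Definition expander_ode (n : nat) (u : R -> R) : Prop :=
  forall x : R, 0 <= x ->
    Derive_n u 2 x =
      ((x * Derive u x - u x) / 2 + (INR n - 1) / u x) * (1 + (Derive u x) ^ 2).

Definition is_u_sigma (n : nat) (sigma : R) (u : R -> R) : Prop :=
  smooth_on_nonneg u /\
  (forall x : R, 0 <= x -> 0 < u x) /\
  expander_ode n u /\
  is_lim (fun x => u x - sigma * x) p_infty 0.

From Stdlib Require Import Reals Lra Lia.
From Coquelicot Require Import Coquelicot.
Open Scope R_scope.

(* Let m = n - 1 and w = x u' - u. The equation gives w' = x (w / 2 + m / u) (1 + u'^2), so
   w' > 0 wherever w >= 0: once nonnegative, w would stay above a positive constant, which
   contradicts u - sigma x -> 0. Hence w < 0, so u / x decreases to sigma and u >= sigma x.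
   If u' <= 0 somewhere, u has a minimum r = u b over [b, oo) with u' b = 0. The quantity
   u^(2m) / (1 + u'^2) has a derivative of the sign of u', which yields r^m u' <= u^m beyond
   b; thus (r / u)^m + m x / r is nondecreasing and u at most doubles on [b, b + r / (2m)].
   Together with u >= sigma x this gives sigma <= 4m. *)

Lemma continuity_pt_of_ex_derive (f : R -> R) (x : R) :
  ex_derive f x -> continuity_pt f x.
Proof. intros Hf. apply continuity_pt_filterlim. exact (ex_derive_continuous f x Hf). Qed.

Lemma nondecreasing_of_derive_nonneg (f df : R -> R) (a b : R) : a <= b ->
  (forall x, a <= x <= b -> is_derive f x (df x)) ->
  (forall x, a <= x <= b -> 0 <= df x) -> f a <= f b.
Proof.
  intros Hab Hf Hdf.
  assert (Hmin : Rmin a b = a) by (apply Rmin_left; lra).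
  assert (Hmax : Rmax a b = b) by (apply Rmax_right; lra).
  destruct (MVT_gen f a b df) as [c [Hc Heq]]; rewrite ?Hmin, ?Hmax in *.
  - intros x Hx. apply Hf. lra.
  - intros x Hx. apply continuity_pt_of_ex_derive. exists (df x). apply Hf. lra.
  - specialize (Hdf c Hc). nra.
Qed.

Lemma increasing_of_derive_pos (f df : R -> R) (a b : R) : a < b ->
  (forall x, a <= x <= b -> is_derive f x (df x)) ->
  (forall x, a <= x <= b -> 0 < df x) -> f a < f b.
Proof.
  intros Hab Hf Hdf.
  apply (incr_function_le f a b df); simpl; try lra;
    intros x Hax Hxb; [apply Hf | apply Hdf]; lra.
Qed.

Lemma derive_nonneg_of_min_right (f : R -> R) (b l d : R) :
  is_derive f b l -> 0 < d -> (forall y, b < y < b + d -> f b <= f y) -> 0 <= l.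
Proof.
  intros Hf Hd Hmin. apply is_derive_Reals in Hf.
  destruct (Rle_or_lt 0 l) as [|Hl]; [assumption|exfalso].
  destruct (Hf (- l) ltac:(lra)) as [[de Hde] Hq].
  set (h := Rmin d de / 2).
  assert (Hh : 0 < h /\ h < d /\ h < de).
  { assert (Rmin d de <= d) by apply Rmin_l. assert (Rmin d de <= de) by apply Rmin_r.
    assert (0 < Rmin d de) by (apply Rmin_pos; lra). unfold h. lra. }
  specialize (Hq h ltac:(lra) ltac:(simpl; rewrite Rabs_right; lra)).
  apply Rabs_def2 in Hq.
  assert (0 <= (f (b + h) - f b) / h).
  { apply Rdiv_le_0_compat; [specialize (Hmin (b + h) ltac:(lra)) |]; lra. }
  lra.
Qed.

Lemma derive_nonpos_of_min_left (f : R -> R) (b l d : R) :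
  is_derive f b l -> 0 < d -> (forall y, b - d < y < b -> f b <= f y) -> l <= 0.
Proof.
  intros Hf Hd Hmin.
  assert (Hreflect : is_derive (fun y => f (- y)) (- b) (- l)).
  { replace (- l) with (scal (-1) l) by (change (scal (-1) l) with (-1 * l); simpl; ring).
    apply (is_derive_comp f Ropp); [rewrite Ropp_involutive; exact Hf|].
    apply (is_derive_opp (fun y => y) (- b) 1), (is_derive_id (- b)). }
  enough (0 <= - l) by lra.
  apply (derive_nonneg_of_min_right _ _ _ d Hreflect Hd).
  intros y Hy. rewrite Ropp_involutive. apply Hmin. lra.
Qed.

Lemma is_lim_p_infty_0_eventually (g : R -> R) : is_lim g p_infty 0 ->
  forall e, 0 < e -> exists M, forall y, M < y -> Rabs (g y) < e.
Proof.
  intros Hg e He. apply is_lim_spec in Hg. destruct (Hg (mkposreal e He)) as [M HM].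
  exists M. intros y Hy. specialize (HM y Hy). rewrite Rminus_0_r in HM. exact HM.
Qed.

Lemma Rmax3_ub (a b c : R) :
  a <= Rmax (Rmax a b) c /\ b <= Rmax (Rmax a b) c /\ c <= Rmax (Rmax a b) c.
Proof.
  assert (Rmax a b <= Rmax (Rmax a b) c) by apply Rmax_l.
  assert (a <= Rmax a b) by apply Rmax_l. assert (b <= Rmax a b) by apply Rmax_r.
  assert (c <= Rmax (Rmax a b) c) by apply Rmax_r.
  lra.
Qed.

(* Otherwise [g] would grow at least like [c ln x]. *)
Lemma not_eventually_ge_mul_derive (g : R -> R) (X0 c : R) :
  is_lim g p_infty 0 -> 0 < c -> (forall x, X0 <= x -> ex_derive g x) ->
  ~ (forall x, X0 <= x -> c <= x * Derive g x).
Proof.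
  intros Hg Hc Hder Hge.
  destruct (is_lim_p_infty_0_eventually g Hg (c / 4)) as [M HM]; [lra|].
  set (X := Rmax (Rmax X0 M) 0 + 1).
  assert (HX : X0 < X /\ M < X /\ 0 < X) by (pose proof (Rmax3_ub X0 M 0); unfold X; lra).
  destruct (MVT_gen g X (2 * X) (Derive g)) as [xi [Hxi Heq]];
    rewrite ?Rmin_left, ?Rmax_right in * by lra.
  - intros x Hx. apply Derive_correct, Hder. lra.
  - intros x Hx. apply continuity_pt_of_ex_derive, Hder. lra.
  - assert (H1 := HM X ltac:(lra)). assert (H2 := HM (2 * X) ltac:(lra)).
    apply Rabs_def2 in H1. apply Rabs_def2 in H2.
    assert (Hxi' := Hge xi ltac:(lra)).
    assert (c / 2 <= Derive g xi * X) by nra.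
    lra.
Qed.

Section Expander.

Variable m : nat.
Hypothesis m_pos : (0 < m)%nat.
Variables (s : R) (u : R -> R).
Hypothesis u_derivable : forall x, 0 <= x -> ex_derive u x.
Hypothesis u'_derivable : forall x, 0 <= x -> ex_derive (Derive u) x.
Hypothesis u_pos : forall x, 0 <= x -> 0 < u x.
Hypothesis u_ode : forall x, 0 <= x ->
  Derive (Derive u) x = ((x * Derive u x - u x) / 2 + INR m / u x) * (1 + Derive u x ^ 2).
Hypothesis u_asymptotic : is_lim (fun x => u x - s * x) p_infty 0.

Let INR_m_pos : 0 < INR m.
Proof. apply lt_0_INR. exact m_pos. Qed.

Let pow_m_pos x : 0 <= x -> 0 < u x ^ m.
Proof. intros Hx. apply pow_lt, u_pos, Hx. Qed.

Let pow_m_pred (x : R) : x ^ m = x * x ^ pred m.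
Proof. rewrite tech_pow_Rmult, Nat.succ_pred_pos by exact m_pos. reflexivity. Qed.

Definition defect (x : R) : R := x * Derive u x - u x.

Lemma defect_not_eventually_ge (C X0 : R) : 0 < C -> ~ (forall x, X0 <= x -> C <= defect x).
Proof.
  intros HC Hge.
  set (g := fun y => u y - s * y).
  assert (Hdg : forall x, 0 <= x -> is_derive g x (Derive u x - s)).
  { intros x Hx. unfold g. auto_derive; [apply u_derivable, Hx |].
    change (Derive (fun y => u y) x) with (Derive u x). ring. }
  destruct (is_lim_p_infty_0_eventually g u_asymptotic (C / 2)) as [M HM]; [lra|].
  set (X := Rmax (Rmax X0 M) 0).
  assert (HX : X0 <= X /\ M <= X /\ 0 <= X) by apply Rmax3_ub.
  apply (not_eventually_ge_mul_derive g (X + 1) (C / 2) u_asymptotic); [lra | |].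
  - intros x Hx. exists (Derive u x - s). apply Hdg. lra.
  - intros x Hx. rewrite (is_derive_unique g x _ (Hdg x ltac:(lra))).
    specialize (Hge x ltac:(lra)). specialize (HM x ltac:(lra)).
    apply Rabs_def2 in HM. unfold defect, g in *. lra.
Qed.

Definition damping_rate (t : R) : R := t * (1 + Derive u t ^ 2) / 2.

Definition damping (x : R) : R := RInt damping_rate 0 x.

Lemma continuous_damping_rate t : 0 <= t -> continuous damping_rate t.
Proof.
  intros Ht. apply (ex_derive_continuous damping_rate).
  unfold damping_rate. auto_derive. apply u'_derivable, Ht.
Qed.

Lemma is_derive_damping x : 0 < x -> is_derive damping x (damping_rate x).
Proof.
  intros Hx. apply (is_derive_RInt damping_rate damping 0 x);
    [| apply continuous_damping_rate; lra].
  apply filter_imp with (P := fun y => 0 < y); [| apply open_gt; exact Hx].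
  intros y Hy. apply (RInt_correct damping_rate), (ex_RInt_continuous damping_rate).
  intros t Ht. rewrite Rmin_left in Ht by lra. apply continuous_damping_rate. lra.
Qed.

Lemma damping_le x y : 0 < x -> x <= y -> damping x <= damping y.
Proof.
  intros Hx Hxy. apply (nondecreasing_of_derive_nonneg damping damping_rate); [lra | |].
  - intros t Ht. apply is_derive_damping. lra.
  - intros t Ht. unfold damping_rate. assert (0 <= Derive u t ^ 2) by apply pow2_ge_0. nra.
Qed.

Definition damped_defect (x : R) : R := defect x * exp (- damping x).

(* [damping] is an integrating factor: [defect' = damping' * defect + x m (1 + u'^2) / u]. *)
Lemma is_derive_damped_defect x : 0 < x ->
  is_derive damped_defect x (x * INR m / u x * (1 + Derive u x ^ 2) * exp (- damping x)).
Proof.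
  intros Hx.
  assert (Hux := u_pos x ltac:(lra)).
  assert (HA := is_derive_unique _ _ _ (is_derive_damping x Hx)).
  unfold damped_defect, defect. auto_derive.
  - repeat split; try (apply u_derivable; lra); try (apply u'_derivable; lra).
    exists (damping_rate x). apply is_derive_damping, Hx.
  - change (Derive (fun y => u y) x) with (Derive u x).
    change (Derive (fun y => Derive u y) x) with (Derive (Derive u) x).
    change (Derive (fun y => damping y) x) with (Derive damping x).
    rewrite HA, (u_ode x ltac:(lra)). unfold damping_rate. field. lra.
Qed.

Lemma damped_defect_lt x y : 0 < x -> x < y -> damped_defect x < damped_defect y.
Proof.
  intros Hx Hxy. apply (increasing_of_derive_pos damped_defect
    (fun t => t * INR m / u t * (1 + Derive u t ^ 2) * exp (- damping t))); [lra | |].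
  - intros t Ht. apply is_derive_damped_defect. lra.
  - intros t Ht. assert (Hut := u_pos t ltac:(lra)).
    assert (0 <= Derive u t ^ 2) by apply pow2_ge_0.
    assert (0 < t * INR m / u t) by (apply Rdiv_lt_0_compat; nra).
    apply Rmult_lt_0_compat; [nra | apply exp_pos].
Qed.

Lemma defect_neg x : 0 <= x -> defect x < 0.
Proof.
  intros [Hx | <-]; [| unfold defect; specialize (u_pos 0 (Rle_refl 0)); lra].
  destruct (Rlt_or_le (defect x) 0) as [|Hw]; [assumption | exfalso].
  assert (0 <= damped_defect x) by (apply Rmult_le_pos; [lra | left; apply exp_pos]).
  assert (Hx1 := damped_defect_lt x (x + 1) Hx ltac:(lra)).
  apply (defect_not_eventually_ge (damped_defect (x + 1) * exp (damping (x + 1))) (x + 1)).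
  { apply Rmult_lt_0_compat; [lra | apply exp_pos]. }
  intros y Hy.
  assert (damped_defect (x + 1) <= damped_defect y).
  { destruct Hy as [Hy | <-]; [left; apply damped_defect_lt | ]; lra. }
  assert (exp (damping (x + 1)) <= exp (damping y)).
  { destruct (damping_le (x + 1) y ltac:(lra) Hy) as [HA | ->];
      [left; apply exp_increasing, HA | lra]. }
  replace (defect y) with (damped_defect y * exp (damping y)).
  2:{ unfold damped_defect. rewrite Rmult_assoc, <- exp_plus, Rplus_opp_l, exp_0. ring. }
  assert (0 < exp (damping (x + 1))) by apply exp_pos.
  apply Rmult_le_compat; lra.
Qed.

(* [u x / x] decreases (its derivative is [defect x / x^2]) towards its limit [s]. *)
Lemma ge_ray x : 0 <= x -> s * x <= u x.
Proof.
  intros [Hx | <-]; [| specialize (u_pos 0 (Rle_refl 0)); lra].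
  destruct (Rle_or_lt (s * x) (u x)) as [|Hlt]; [assumption | exfalso].
  set (q := u x / x).
  assert (Hq : q * x = u x) by (unfold q; field; lra).
  destruct (is_lim_p_infty_0_eventually _ u_asymptotic ((s - q) * x)) as [M HM]; [nra|].
  set (y := Rmax M x + 1).
  assert (Hy : M < y /\ x < y).
  { assert (M <= Rmax M x) by apply Rmax_l. assert (x <= Rmax M x) by apply Rmax_r.
    unfold y. lra. }
  assert (Hqy : - q <= - (u y / y)).
  { apply (nondecreasing_of_derive_nonneg (fun t => - (u t / t))
             (fun t => - defect t / t ^ 2) x y); [lra | |].
    - intros t Ht. unfold defect. auto_derive.
      + split; [apply u_derivable | ]; lra.
      + change (Derive (fun z => u z) t) with (Derive u t). field. lra.
    - intros t Ht. assert (Hwt := defect_neg t ltac:(lra)).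
      apply Rdiv_le_0_compat; [lra | apply pow_lt; lra]. }
  assert (u y <= q * y).
  { assert (u y / y * y = u y) by (field; lra). nra. }
  specialize (HM y ltac:(lra)). apply Rabs_def2 in HM. nra.
Qed.

Lemma exists_critical_min_right x0 : 0 < s -> 0 <= x0 -> Derive u x0 <= 0 ->
  exists b, x0 <= b /\ Derive u b = 0 /\ forall y, b <= y -> u b <= u y.
Proof.
  intros Hs Hx0 Hd0.
  assert (Hu0 := u_pos x0 Hx0).
  set (X := x0 + u x0 / s + 1).
  assert (HX : x0 + u x0 / s < X) by (unfold X; lra).
  assert (0 < u x0 / s) by (apply Rdiv_lt_0_compat; lra).
  assert (Hfar : forall y, X <= y -> u x0 < u y).
  { intros y Hy. assert (Hray := ge_ray y ltac:(lra)).
    assert (s * (u x0 / s) = u x0) by (field; lra). nra. }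
  destruct (continuity_ab_min u x0 X) as [b [Hb Hbr]]; [lra | |].
  { intros c Hc. apply continuity_pt_of_ex_derive, u_derivable. lra. }
  assert (Hmin : forall y, x0 <= y -> u b <= u y).
  { intros y Hy. destruct (Rle_or_lt y X) as [HyX | HyX]; [apply Hb; lra|].
    assert (u b <= u x0) by (apply Hb; lra). specialize (Hfar y ltac:(lra)). lra. }
  exists b. split; [lra | split; [| intros y Hy; apply Hmin; lra]].
  assert (Hub := Derive_correct u b (u_derivable b ltac:(lra))).
  assert (0 <= Derive u b).
  { apply (derive_nonneg_of_min_right u b _ 1 Hub); [lra|].
    intros y Hy. apply Hmin. lra. }
  destruct (Req_dec b x0) as [-> | Hne]; [lra|].
  enough (Derive u b <= 0) by lra.
  apply (derive_nonpos_of_min_left u b _ (b - x0) Hub); [lra|].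
  intros y Hy. apply Hmin. lra.
Qed.

Definition tilted_height (x : R) : R := (u x ^ m) ^ 2 / (1 + Derive u x ^ 2).

Definition tilted_height_rate (x : R) : R := (u x ^ m) ^ 2 * - defect x / (1 + Derive u x ^ 2).

Lemma is_derive_tilted_height x : 0 <= x ->
  is_derive tilted_height x (Derive u x * tilted_height_rate x).
Proof.
  intros Hx. assert (Hux := u_pos x Hx).
  assert (0 < 1 + Derive u x ^ 2) by (assert (0 <= Derive u x ^ 2) by apply pow2_ge_0; lra).
  unfold tilted_height, tilted_height_rate, defect. auto_derive.
  - repeat split; [apply u_derivable, Hx | apply u'_derivable, Hx | lra].
  - change (Derive (fun y => u y) x) with (Derive u x).
    change (Derive (fun y => Derive u y) x) with (Derive (Derive u) x).
    rewrite (u_ode x Hx), (pow_m_pred (u x)). field. lra.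
Qed.

Lemma tilted_height_rate_pos x : 0 <= x -> 0 < tilted_height_rate x.
Proof.
  intros Hx. unfold tilted_height_rate.
  assert (Hw := defect_neg x Hx). assert (Hum := pow_m_pos x Hx).
  assert (0 <= Derive u x ^ 2) by apply pow2_ge_0.
  apply Rdiv_lt_0_compat; [apply Rmult_lt_0_compat|]; nra.
Qed.

Section CriticalMinimum.

Variable b : R.
Hypothesis b_nonneg : 0 <= b.
Hypothesis b_critical : Derive u b = 0.
Hypothesis b_min : forall y, b <= y -> u b <= u y.

(* At an interior minimum of [tilted_height] on [[b, x]] we have [u' = 0], where
   [tilted_height = u^(2m) >= (u b)^(2m)]; the minimum cannot sit at [x] since [u' x > 0]. *)
Lemma tilted_height_ge x : b <= x -> 0 < Derive u x -> (u b ^ m) ^ 2 <= tilted_height x.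
Proof.
  intros Hx Hux.
  assert (Hbx : b < x) by (destruct Hx as [|<-]; lra).
  assert (Hcrit : forall y, Derive u y = 0 -> tilted_height y = (u y ^ m) ^ 2).
  { intros y Hy. unfold tilted_height. rewrite Hy. field. }
  assert (Hder : forall y, b <= y ->
      is_derive tilted_height y (Derive u y * tilted_height_rate y)).
  { intros y Hy. apply is_derive_tilted_height. lra. }
  destruct (continuity_ab_min tilted_height b x) as [a [Hmin Ha]]; [lra | |].
  { intros c Hc. apply continuity_pt_of_ex_derive. eexists. apply Hder. lra. }
  apply Rle_trans with (tilted_height a); [| apply Hmin; lra].
  assert (Hrate := tilted_height_rate_pos a ltac:(lra)).
  destruct (Req_dec a b) as [-> | Hab]; [rewrite Hcrit; lra|].
  destruct (Req_dec a x) as [-> | Hax].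
  - exfalso.
    assert (Derive u x * tilted_height_rate x <= 0).
    { apply (derive_nonpos_of_min_left tilted_height x _ (x - b) (Hder x Hx)); [lra|].
      intros y Hy. apply Hmin. lra. }
    nra.
  - assert (Hr : 0 <= Derive u a * tilted_height_rate a).
    { apply (derive_nonneg_of_min_right tilted_height a _ (x - a) (Hder a ltac:(lra)));
        [lra|]. intros y Hy. apply Hmin. lra. }
    assert (Hl : Derive u a * tilted_height_rate a <= 0).
    { apply (derive_nonpos_of_min_left tilted_height a _ (a - b) (Hder a ltac:(lra)));
        [lra|]. intros y Hy. apply Hmin. lra. }
    assert (Hua : Derive u a = 0) by nra.
    rewrite (Hcrit a Hua).
    assert (u b ^ m <= u a ^ m) by (apply pow_incr; split; [left; apply u_pos | apply b_min]; lra).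
    assert (Hbm := pow_m_pos b b_nonneg). nra.
Qed.

Lemma slope_le_pow x : b <= x -> u b ^ m * Derive u x <= u x ^ m.
Proof.
  intros Hx.
  assert (Hbm := pow_m_pos b b_nonneg). assert (Hxm := pow_m_pos x ltac:(lra)).
  destruct (Rle_or_lt (Derive u x) 0) as [Hux | Hux]; [nra|].
  assert (Hh := tilted_height_ge x Hx Hux). unfold tilted_height in Hh.
  assert (0 < 1 + Derive u x ^ 2) by (assert (0 <= Derive u x ^ 2) by apply pow2_ge_0; lra).
  assert ((u b ^ m) ^ 2 * (1 + Derive u x ^ 2) <= (u x ^ m) ^ 2).
  { replace ((u x ^ m) ^ 2) with ((u x ^ m) ^ 2 / (1 + Derive u x ^ 2) * (1 + Derive u x ^ 2))
      by (field; lra).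
    apply Rmult_le_compat_r; lra. }
  nra.
Qed.

(* By [slope_le_pow], [F] is nondecreasing. *)
Lemma u_le_double : u (b + u b / (2 * INR m)) <= 2 * u b.
Proof.
  set (r := u b). set (xs := b + r / (2 * INR m)).
  assert (Hr : 0 < r) by (apply u_pos, b_nonneg).
  assert (Hrm := pow_m_pos b b_nonneg). fold r in Hrm.
  set (F := fun y => r ^ m / u y ^ m + INR m * y / r).
  set (dF := fun y => INR m * (u y ^ m * u y - r ^ m * Derive u y * r) / (r * u y ^ m * u y)).
  assert (Hxs : b <= xs) by (unfold xs; assert (0 < r / (2 * INR m)) by
    (apply Rdiv_lt_0_compat; lra); lra).
  assert (HF : F b <= F xs).
  { apply (nondecreasing_of_derive_nonneg F dF b xs Hxs).
    - intros y Hy. assert (Huy := u_pos y ltac:(lra)). assert (Hym := pow_m_pos y ltac:(lra)).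
      unfold F, dF. auto_derive.
      + repeat split; [apply u_derivable; lra | lra].
      + change (Derive (fun z => u z) y) with (Derive u y).
        rewrite (pow_m_pred (u y)). field. repeat split; try lra. apply pow_nonzero. lra.
    - intros y Hy. assert (Huy := u_pos y ltac:(lra)). assert (Hym := pow_m_pos y ltac:(lra)).
      assert (Hslope := slope_le_pow y ltac:(lra)). assert (Hry := b_min y ltac:(lra)).
      fold r in Hslope, Hry.
      apply Rdiv_le_0_compat; [| apply Rmult_lt_0_compat; [apply Rmult_lt_0_compat|]; lra].
      apply Rmult_le_pos; [lra | nra]. }
  assert (Hus := u_pos xs ltac:(lra)). assert (Husm := pow_m_pos xs ltac:(lra)).
  assert (Hrs := b_min xs Hxs). fold r in Hrs.
  unfold F in HF.
  replace (r ^ m / u b ^ m) with 1 in HF by (fold r; field; lra).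
  replace (INR m * xs / r) with (INR m * b / r + / 2) in HF by (unfold xs; field; lra).
  assert (Hhalf : u xs ^ m <= 2 * r ^ m).
  { assert (Hq : 1 / 2 <= r ^ m / u xs ^ m) by lra.
    apply (Rmult_le_compat_r (u xs ^ m)) in Hq; [| lra].
    replace (r ^ m / u xs ^ m * u xs ^ m) with (r ^ m) in Hq by (field; lra). lra. }
  rewrite (pow_m_pred (u xs)), (pow_m_pred r) in Hhalf.
  assert (r ^ pred m <= u xs ^ pred m) by (apply pow_incr; lra).
  assert (0 < r ^ pred m) by (apply pow_lt; lra).
  nra.
Qed.

Lemma s_le_of_critical_min : s <= 4 * INR m.
Proof.
  destruct (Rle_or_lt s 0) as [| Hs]; [lra |].
  set (r := u b).
  assert (Hr : 0 < r) by (apply u_pos, b_nonneg).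
  assert (Hdouble := u_le_double). fold r in Hdouble.
  assert (Hstep : 0 < r / (2 * INR m)) by (apply Rdiv_lt_0_compat; lra).
  assert (Hray := ge_ray (b + r / (2 * INR m)) ltac:(lra)).
  assert (Hsr : s * (r / (2 * INR m)) <= 2 * r).
  { assert (s * (r / (2 * INR m)) <= s * (b + r / (2 * INR m)))
      by (apply Rmult_le_compat_l; lra).
    lra. }
  apply (Rmult_le_compat_r (2 * INR m)) in Hsr; [| lra].
  replace (s * (r / (2 * INR m)) * (2 * INR m)) with (s * r) in Hsr by (field; lra).
  nra.
Qed.

End CriticalMinimum.

Lemma Derive_pos : 4 * INR m < s -> forall x, 0 <= x -> 0 < Derive u x.
Proof.
  intros Hs x Hx.
  destruct (Rlt_or_le 0 (Derive u x)) as [| Hux]; [assumption | exfalso].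
  destruct (exists_critical_min_right x) as [b [Hxb [Hcrit Hmin]]]; [lra | exact Hx | exact Hux |].
  pose proof (s_le_of_critical_min b ltac:(lra) Hcrit Hmin). lra.
Qed.

End Expander.

Theorem lemma7 (n : nat) (hn : (2 <= n)%nat) :
  exists sigma0 : R, forall sigma : R, 0 < sigma -> sigma0 < sigma ->
    forall u : R -> R,
      is_u_sigma n sigma u ->
      (forall v : R -> R, is_u_sigma n sigma v -> forall x : R, 0 <= x -> v x = u x) ->
      forall x : R, 0 <= x -> 0 < Derive u x.
Proof.
  exists (4 * INR (n - 1)).
  intros s _ Hs u [[eps [Heps Hsmooth]] [Hpos [Hode Hlim]]] _.
  assert (Hcoef : INR n - 1 = INR (n - 1)) by (rewrite minus_INR by lia; reflexivity).
  apply (Derive_pos (n - 1) ltac:(lia) s u); [| | exact Hpos | | exact Hlim | exact Hs].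
  - intros x Hx. apply (Hsmooth 1%nat). lra.
  - intros x Hx. apply (Hsmooth 2%nat). lra.
  - intros x Hx. rewrite <- Hcoef. exact (Hode x Hx).
Qed.
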